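(* Let $F$, $G$, and $H$ be simple graphs. Then \[\hom(F,G\cdot H)=\sum_{\mathcal{R}}\hom(F/\mathcal{R},G)\,\hom\Big(\coprod_{R\in\mathcal{R}}F[R],H\Big),\] where the sum ranges over all partitions $\mathcal{R}$ of $V(F)$ such that $F[R]$ is connected for all $R\in\mathcal{R}$.
   Context: All graphs are finite, undirected, without multiple edges; simple means without loops. $\hom(F,G)$ counts homomorphisms $F\to G$. $G\cdot H$ is the lexicographic product: vertex set $V(G)\times V(H)$, with $(g,h)$ adjacent to $(g',h')$ iff $g=g'$ and $hh'\in E(H)$, or $gg'\in E(G)$. $F[R]$ is the subgraph induced by $R$; $\coprod$ is disjoint union. For a partition $\mathcal{R}$ of $V(F)$, $F/\mathcal{R}$ is the simple graph with vertex set $\mathcal{R}$ and an edge $PQ$ ($P\ne Q$) iff some $p\in P$ and $q\in Q$ are adjacent in $F$. *)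

From mathcomp Require Import all_boot.
Set Implicit Arguments. Unset Strict Implicit. Unset Printing Implicit Defensive.

Definition simple_graph (T : finType) (e : rel T) : Prop :=
  symmetric e /\ irreflexive e.

Definition hom (A B : finType) (eA : rel A) (eB : rel B) : nat :=
  #|[set f : {ffun A -> B} | [forall x, forall y, eA x y ==> eB (f x) (f y)]]|.

Definition lexprod (TG TH : finType) (eG : rel TG) (eH : rel TH) : rel (TG * TH) :=
  fun a b => ((a.1 == b.1) && eH a.2 b.2) || eG a.1 b.1.

Definition block (T : finType) (R : {set {set T}}) := {X : {set T} | X \in R}.

Definition quot_rel (T : finType) (e : rel T) (R : {set {set T}}) : rel (block R) :=
  fun P Q => (val P != val Q) &&
             [exists p in val P, exists q in val Q, e p q].

(* Disjoint union of the induced subgraphs F[X], X in R: vertices are pairs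
   (X, x) with x in X; (X,x) ~ (Y,y) iff X = Y and x ~ y in F. *)
Definition coprod_type (T : finType) (R : {set {set T}}) :=
  {X : block R & {x : T | x \in val X}}.

Definition coprod_rel (T : finType) (e : rel T) (R : {set {set T}}) :
  rel (coprod_type R) :=
  fun u v => (tag u == tag v) && e (val (tagged u)) (val (tagged v)).

Definition induced_connected (T : finType) (e : rel T) (X : {set T}) : bool :=
  (X != set0) &&
  [forall x in X, forall y in X,
     connect [rel a b | [&& a \in X, b \in X & e a b]] x y].

Arguments quot_rel {T} e R.
Arguments coprod_rel {T} e R.

From mathcomp Require Import all_boot.

(* A homomorphism f : F -> G.H determines the partition of V(F) into the
   components of the spanning subgraph of F keeping the edges on which the
   G-coordinate of f is constant; its blocks induce connected subgraphs.
   Relative to a fixed such partition R, f splits into a map F/R -> G and a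
   map from the disjoint union of the F[X] to H.  Since G is loopless, an edge
   inside a block must be mapped by the H-coordinate to an edge of H, and an
   edge between blocks (whose G-images differ, or the blocks would merge) must
   be mapped by the G-coordinate to an edge of G; conversely every pair of
   homomorphisms glues back to an f whose partition is exactly R. *)

Set Implicit Arguments. Unset Strict Implicit. Unset Printing Implicit Defensive.

Definition is_hom (A B : finType) (eA : rel A) (eB : rel B) (f : A -> B) : bool :=
  [forall x, forall y, eA x y ==> eB (f x) (f y)].

Lemma homE (A B : finType) (eA : rel A) (eB : rel B) :
  hom eA eB = #|[set f : {ffun A -> B} | is_hom eA eB f]|.
Proof. by []. Qed.

Lemma is_homP (A B : finType) (eA : rel A) (eB : rel B) (f : A -> B) :
  reflect (forall x y, eA x y -> eB (f x) (f y)) (is_hom eA eB f).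
Proof.
apply: (iffP forallP) => [hf x y exy | hf x].
  by move/forallP: (hf x) => /(_ y)/implyP; apply.
by apply/forallP => y; apply/implyP; apply: hf.
Qed.

Lemma connect_restrict (T : finType) (e : rel T) (X : {set T}) x y :
  closed e X -> x \in X -> connect e x y ->
  connect [rel a b | [&& a \in X, b \in X & e a b]] x y.
Proof.
move=> clX + /connectP [p pth ->].
elim: p x pth => [|z p IH] x /=; first by rewrite connect0.
case/andP=> exz pth Xx; have Xz : z \in X by rewrite -(clX _ _ exz).
by apply: connect_trans (connect1 _) (IH z pth Xz); rewrite /= Xx Xz.
Qed.

Lemma equivalence_partition_eqP (T : finType) (r : rel T) (P : {set {set T}}) :
  {in [set: T] & &, equivalence_rel r} -> partition P [set: T] ->
  reflect (forall x y, r x y = (y \in pblock P x))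
          (equivalence_partition r [set: T] == P).
Proof.
move=> eqr pP; apply: (iffP eqP) => [<- x y | rP].
  by rewrite (pblock_equivalence_partition eqr) ?inE.
rewrite -[RHS](equivalence_partition_pblock pP).
by apply: eq_imset => x; apply/setP => y; rewrite !inE rP.
Qed.

Section FiberPartition.

Variables (T : finType) (U : eqType) (e : rel T) (k : T -> U).
Hypothesis sym_e : symmetric e.

Definition fiber_rel : rel T := [rel a b | e a b && (k a == k b)].

Lemma fiber_relE a b : fiber_rel a b = e a b && (k a == k b).
Proof. by []. Qed.

Definition fiber_partition : {set {set T}} :=
  equivalence_partition (connect fiber_rel) [set: T].

Lemma fiber_rel_connect_sym : connect_sym fiber_rel.
Proof. by apply: sym_connect_sym => a b; rewrite !fiber_relE sym_e eq_sym. Qed.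

Lemma connect_fiber_rel x y : connect fiber_rel x y -> k x = k y.
Proof.
have clk : closed fiber_rel [pred z | k z == k x].
  by move=> a b /andP [_ /eqP kab]; rewrite !inE kab.
by move/(closed_connect clk); rewrite !inE eqxx => /esym/eqP.
Qed.

Lemma fiber_rel_equivalence : {in [set: T] & &, equivalence_rel (connect fiber_rel)}.
Proof.
move=> x y z _ _ _; split=> [|cxy]; first exact: connect0.
apply/idP/idP => [cxz | ]; last exact: connect_trans.
by apply: connect_trans cxz; rewrite fiber_rel_connect_sym.
Qed.

Lemma mem_pblock_fiber_partition x y :
  (y \in pblock fiber_partition x) = connect fiber_rel x y.
Proof. by rewrite (pblock_equivalence_partition fiber_rel_equivalence) ?inE. Qed.

Lemma fiber_partition_connected :
  partition fiber_partition [set: T] &&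
  [forall X in fiber_partition, induced_connected e X].
Proof.
rewrite (equivalence_partitionP fiber_rel_equivalence) /=.
apply/forall_inP => _ /imsetP [x _ ->]; apply/andP; split.
  by apply/set0Pn; exists x; rewrite !inE connect0.
apply/forall_inP => a; rewrite inE => /andP [_ xa].
apply/forall_inP => b; rewrite inE => /andP [_ xb].
set S := [set y in _ | _].
have clS : closed fiber_rel S.
  apply: (intro_closed fiber_rel_connect_sym) => u v euv; rewrite !inE => cxu.
  exact: connect_trans cxu (connect1 euv).
have Sa : a \in S by rewrite !inE xa.
have cab : connect fiber_rel a b.
  by apply: connect_trans _ xb; rewrite fiber_rel_connect_sym.
apply: connect_sub (connect_restrict clS Sa cab) => u v /and3P [Su Sv /andP [euv _]].
by apply: connect1; rewrite /= Su Sv.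
Qed.

End FiberPartition.

Section GluingAlongPartition.

Variables (TF TG TH : finType) (eF : rel TF) (eG : rel TG) (eH : rel TH).
Variable R : {set {set TF}}.
Hypothesis pR : partition R [set: TF].

Lemma pblock_partition_mem x : pblock R x \in R.
Proof. by have [/eqP covR _ _] := and3P pR; apply: pblock_mem; rewrite covR inE. Qed.

Definition block_of x : block R := Sub (pblock R x) (pblock_partition_mem x).

Lemma mem_block_of x : x \in val (block_of x).
Proof. by have [/eqP covR _ _] := and3P pR; rewrite /= mem_pblock covR inE. Qed.

Lemma block_ofE (P : block R) x : x \in val P -> block_of x = P.
Proof.
have [_ tiR _] := and3P pR.
by move=> xP; apply: val_inj; rewrite /= (def_pblock tiR (valP P) xP).
Qed.

Lemma eq_block_of x y : (block_of x == block_of y) = (y \in pblock R x).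
Proof.
have [/eqP covR tiR _] := and3P pR.
by rewrite -(inj_eq val_inj) /= eq_pblock // covR inE.
Qed.

Lemma block_nonempty (P : block R) : exists x, x \in val P.
Proof. by have [_ _ nR0] := and3P pR; apply/set0Pn; apply: (memPn nR0); apply: valP. Qed.

Definition vertex_of x : coprod_type R :=
  Tagged (fun P : block R => {y | y \in val P}) (exist _ x (mem_block_of x)).

Lemma vertex_of_tagged (u : coprod_type R) : vertex_of (val (tagged u)) = u.
Proof.
case: u => P [x xP]; rewrite /vertex_of.
move: (block_of x) (mem_block_of x) (block_ofE xP) => B xB BP; subst B.
by rewrite (bool_irrelevance xB xP).
Qed.

Lemma coprod_rel_vertex_of x y :
  coprod_rel eF R (vertex_of x) (vertex_of y) = (block_of x == block_of y) && eF x y.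
Proof. by []. Qed.

Lemma quot_rel_block_of x y :
  eF x y -> block_of x != block_of y -> quot_rel eF R (block_of x) (block_of y).
Proof.
move=> exy nxy; apply/andP; split; first by rewrite (inj_eq val_inj).
apply/exists_inP; exists x; first exact: mem_block_of.
by apply/exists_inP; exists y; first exact: mem_block_of.
Qed.

Lemma quot_relP (P Q : block R) :
  quot_rel eF R P Q ->
  exists x y, [/\ P = block_of x, Q = block_of y, P != Q & eF x y].
Proof.
case/andP=> nPQ /exists_inP [x xP /exists_inP [y yQ exy]].
exists x, y; rewrite (block_ofE xP) (block_ofE yQ) in nPQ *.
by split; rewrite // -(inj_eq val_inj).
Qed.

Definition glue (p : {ffun block R -> TG} * {ffun coprod_type R -> TH}) :
  {ffun TF -> TG * TH} :=
  [ffun x => (p.1 (block_of x), p.2 (vertex_of x))].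

Lemma glue_inj : injective glue.
Proof.
move=> [g1 h1] [g2 h2] /ffunP E; congr pair; apply/ffunP.
  move=> P; have [x xP] := block_nonempty P.
  by move: (E x); rewrite !ffunE (block_ofE xP) => -[].
by move=> u; move: (E (val (tagged u))); rewrite !ffunE vertex_of_tagged => -[].
Qed.

Lemma glue_onto (f : {ffun TF -> TG * TH}) :
  (forall x y, y \in pblock R x -> (f x).1 = (f y).1) -> exists p, f = glue p.
Proof.
move=> f1_const.
exists ([ffun P => (f (xchoose (block_nonempty P))).1], [ffun u => (f (val (tagged u))).2]).
apply/ffunP => x; rewrite !ffunE /=.
by rewrite -(f1_const x _ (xchooseP (block_nonempty (block_of x)))); case: (f x).
Qed.

Hypotheses (sF : symmetric eF) (iG : irreflexive eG).
Hypothesis cR : [forall X in R, induced_connected eF X].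

Lemma fiber_partition_glueP (p : {ffun block R -> TG} * {ffun coprod_type R -> TH}) :
  reflect (forall x y, eF x y -> block_of x != block_of y ->
             p.1 (block_of x) != p.1 (block_of y))
          (fiber_partition eF (fun x => (glue p x).1) == R).
Proof.
apply: (iffP (equivalence_partition_eqP (fiber_rel_equivalence _ sF) pR)).
  move=> connectE x y exy; apply: contraNneq => pxy.
  by rewrite eq_block_of -connectE connect1 // fiber_relE !ffunE exy pxy eqxx.
move=> sep x y; apply/idP/idP => [cxy | xy].
  rewrite -eq_block_of; apply/eqP/(connect_fiber_rel (e := eF)).
  apply: connect_sub cxy => a b /andP [eab]; rewrite !ffunE /= => pab.
  by apply: connect1; rewrite fiber_relE eab; apply: contraLR pab => /(sep _ _ eab).
have xx : x \in pblock R x by rewrite -eq_block_of.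
move/forall_inP: cR => /(_ _ (pblock_partition_mem x)) /andP [_ /forall_inP cx].
have blockE := block_ofE (P := block_of x).
move/forall_inP: (cx x xx) => /(_ y xy); apply: connect_sub => a b /and3P [xa xb eab].
by apply: connect1; rewrite fiber_relE eab !ffunE /= (blockE _ xa) (blockE _ xb) eqxx.
Qed.

Lemma is_hom_glue (p : {ffun block R -> TG} * {ffun coprod_type R -> TH}) :
  is_hom eF (lexprod eG eH) (glue p) &&
    (fiber_partition eF (fun x => (glue p x).1) == R) =
  is_hom (quot_rel eF R) eG p.1 && is_hom (coprod_rel eF R) eH p.2.
Proof.
case: p => g h; apply/andP/andP => /= [[/is_homP hf /fiber_partition_glueP sep] | ].
  split; apply/is_homP.
    move=> _ _ /quot_relP [x [y [-> -> nxy exy]]].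
    by move: (hf _ _ exy); rewrite /lexprod !ffunE /= (negbTE (sep _ _ exy nxy)).
  move=> u v; rewrite -(vertex_of_tagged u) -(vertex_of_tagged v) coprod_rel_vertex_of.
  case/andP=> /eqP bxy exy; move: (hf _ _ exy).
  by rewrite /lexprod !ffunE /= bxy iG orbF => /andP [].
case=> /is_homP hg /is_homP hh; split.
  apply/is_homP => x y exy; rewrite /lexprod !ffunE /=.
  have [bxy | nxy] := eqVneq (block_of x) (block_of y).
    by rewrite bxy eqxx hh // coprod_rel_vertex_of bxy eqxx.
  by rewrite hg ?orbT // quot_rel_block_of.
apply/fiber_partition_glueP => x y exy nxy /=.
by apply: contraTneq (hg _ _ (quot_rel_block_of exy nxy)) => ->; rewrite iG.
Qed.

Lemma card_lex_homs_fiber_partition :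
  #|[set f : {ffun TF -> TG * TH} | is_hom eF (lexprod eG eH) f &&
                                   (fiber_partition eF (fun x => (f x).1) == R)]| =
  hom (quot_rel eF R) eG * hom (coprod_rel eF R) eH.
Proof.
rewrite !homE -cardsX -(card_imset _ glue_inj); apply: eq_card => f.
rewrite inE; apply/idP/imsetP => [/andP [hf /eqP fR] | [[g h] + ->]].
  have [[g h] fgh] : exists p, f = glue p.
    apply: glue_onto => x y; rewrite -fR mem_pblock_fiber_partition //.
    exact: connect_fiber_rel.
  by exists (g, h); rewrite // in_setX !inE -(is_hom_glue (g, h)) -fgh hf fR eqxx.
by rewrite in_setX !inE -(is_hom_glue (g, h)).
Qed.

End GluingAlongPartition.

Theorem theorem16 (TF TG TH : finType) (eF : rel TF) (eG : rel TG) (eH : rel TH) :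
  simple_graph eF -> simple_graph eG -> simple_graph eH ->
  hom eF (lexprod eG eH) =
  \sum_(R : {set {set TF}} | partition R [set: TF] &&
                             [forall X in R, induced_connected eF X])
     hom (quot_rel eF R) eG * hom (coprod_rel eF R) eH.
Proof.
move=> [sF _] [_ iG] _.
rewrite homE -sum1_card.
rewrite (partition_big (fun f : {ffun TF -> TG * TH} => fiber_partition eF (fun x => (f x).1))
  (fun R => partition R [set: TF] && [forall X in R, induced_connected eF X])) /=; last first.
  by move=> f _; apply: fiber_partition_connected.
apply: eq_bigr => R /andP [pR cR].
rewrite sum1dep_card -card_lex_homs_fiber_partition //.
by apply: eq_card => f; rewrite !inE.
Qed.
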